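(* As $n\to\infty$, $$E(n)=2^{n+1}\left(\frac1n-\frac{3}{n^2}+O\!\left(\frac1{n^3}\right)\right),$$ where $E(n)=(-1)^n n!\{R_n(2)-R_n(1)R_{n-1}(1)\}$ with $R_n(x)=\sum_{k=0}^n (-x)^k/k!$.
   Context: $E(n)$ is the optimal value of the linear programming relaxation (variables $x_u\in[0,1]$, $u\in\mathbb{F}_2^n$) of the problem of minimizing $\sum_u x_u$ subject to $x_v+\sum_{u\supset v,\ \mathrm{dist}(u,v)=1}x_u\ge1$ for all $v\in\mathbb{F}_2^n$; it equals the stated closed form. *)

From Stdlib Require Import Reals Arith Factorial.
Open Scope R_scope.

Definition Rpoly (n : nat) (x : R) : R :=
  sum_f_R0 (fun k => (- x) ^ k / INR (fact k)) n.

(* E(n) = (-1)^n n! (R_n(2) - R_n(1) R_{n-1}(1)).  For n = 0 the index n-1 is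
   truncated to 0; irrelevant for the asymptotic statement (n >= 1). *)
Definition E (n : nat) : R :=
  (-1) ^ n * INR (fact n) * (Rpoly n 2 - Rpoly n 1 * Rpoly (n - 1) 1).

From Stdlib Require Import Reals Factorial Lra Lia Psatz.
Open Scope R_scope.

(* Write R_n(x) = e^{-x} - r_n(x), with the Taylor remainder r_n(x) bounded by
   twice its first term.  Since e^{-2} = e^{-1} e^{-1}, the constant parts cancel
   in R_n(2) - R_n(1) R_{n-1}(1); peeling the two leading terms
   (-2)^{n+1}/(n+1)! and (-2)^{n+2}/(n+2)! off r_n(2) gives, after multiplying by
   (-1)^n n!, the main term 2^{n+1} n / ((n+1)(n+2)) = 2^{n+1} (1/n - 3/n^2 + O(1/n^3)).
   What is left is n! r_{n+2}(2) = O(2^n/n^3), plus terms built from r_n(1) and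
   r_{n-1}(1) that are O(1) after multiplying by n!, hence O(2^n/n^3) as well. *)

Lemma Rpoly_S n x : Rpoly (S n) x = Rpoly n x + (- x) ^ S n / INR (fact (S n)).
Proof. reflexivity. Qed.

Lemma Rpoly_cv x : Un_cv (fun N => Rpoly N x) (exp (- x)).
Proof.
  intros eps Heps; destruct (E1_cvg (- x) eps Heps) as [N HN]; exists N.
  intros k Hk; unfold Rpoly.
  rewrite (sum_eq _ (fun j => / INR (fact j) * (- x) ^ j)); [exact (HN k Hk)|].
  intros j _; unfold Rdiv; ring.
Qed.

Lemma Rabs_exp_term x k : 0 <= x ->
  Rabs ((- x) ^ k / INR (fact k)) = x ^ k / INR (fact k).
Proof.
  intros Hx; pose proof (INR_fact_lt_0 k).
  unfold Rdiv; rewrite Rabs_mult, Rabs_inv, <- RPow_abs, Rabs_Ropp.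
  rewrite (Rabs_pos_eq x), (Rabs_pos_eq (INR (fact k))); lra.
Qed.

Lemma exp_term_S_le_half x k : 0 <= x -> 2 * x <= INR (S k) ->
  x ^ S k / INR (fact (S k)) <= x ^ k / INR (fact k) / 2.
Proof.
  intros Hx Hk; pose proof (INR_fact_lt_0 k).
  assert (0 <= x ^ k) by (apply pow_le; lra).
  rewrite fact_simpl, mult_INR; simpl pow.
  assert (0 < INR (S k)) by (apply lt_0_INR; lia).
  replace (x * x ^ k / (INR (S k) * INR (fact k)))
    with (x ^ k / INR (fact k) * (x / INR (S k))) by (field; lra).
  replace (x ^ k / INR (fact k) / 2) with (x ^ k / INR (fact k) * / 2) by (field; lra).
  apply Rmult_le_compat_l; [apply Rmult_le_pos; [lra | left; apply Rinv_0_lt_compat; lra]|].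
  apply Rmult_le_reg_r with (INR (S k)); [lra|].
  unfold Rdiv; rewrite Rmult_assoc, Rinv_l; lra.
Qed.

(* The invariant [|partial tail| + last term <= 2 * first term] is preserved
   because each new term is at most half of the previous one. *)
Lemma Rpoly_partial_tail_le x n : 0 <= x -> 2 * x <= INR (n + 2) -> forall m,
  Rabs (Rpoly (n + S m) x - Rpoly n x) + x ^ (n + S m) / INR (fact (n + S m))
    <= 2 * (x ^ (n + 1) / INR (fact (n + 1))).
Proof.
  intros Hx Hn; induction m as [|m IH].
  - rewrite Nat.add_1_r, Rpoly_S.
    replace (_ + _ - _) with ((- x) ^ S n / INR (fact (S n))) by ring.
    rewrite Rabs_exp_term by lra; lra.
  - replace (n + S (S m))%nat with (S (n + S m)) by lia; rewrite Rpoly_S.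
    replace (_ + _ - _) with ((Rpoly (n + S m) x - Rpoly n x)
                              + (- x) ^ S (n + S m) / INR (fact (S (n + S m)))) by ring.
    assert (Hhalf : x ^ S (n + S m) / INR (fact (S (n + S m)))
                    <= x ^ (n + S m) / INR (fact (n + S m)) / 2).
    { apply exp_term_S_le_half; [lra|].
      apply Rle_trans with (INR (n + 2)); [lra|apply le_INR; lia]. }
    pose proof (Rabs_triang (Rpoly (n + S m) x - Rpoly n x)
                  ((- x) ^ S (n + S m) / INR (fact (S (n + S m))))).
    rewrite Rabs_exp_term in * by lra; lra.
Qed.

Definition exp_rem (n : nat) (x : R) : R := exp (- x) - Rpoly n x.

Lemma Rpoly_exp_rem n x : Rpoly n x = exp (- x) - exp_rem n x.
Proof. unfold exp_rem; ring. Qed.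

Lemma exp_rem_S n x : exp_rem n x = (- x) ^ S n / INR (fact (S n)) + exp_rem (S n) x.
Proof. unfold exp_rem; rewrite Rpoly_S; ring. Qed.

Lemma exp_rem_bound x n : 0 <= x -> 2 * x <= INR (n + 2) ->
  Rabs (exp_rem n x) <= 2 * (x ^ (n + 1) / INR (fact (n + 1))).
Proof.
  intros Hx Hn; apply Rle_plus_epsilon; intros eps Heps.
  destruct (Rpoly_cv x eps Heps) as [N HN].
  specialize (HN (n + S N)%nat ltac:(lia)); unfold Rdist in HN.
  pose proof (Rpoly_partial_tail_le x n Hx Hn N) as Htail.
  assert (0 <= x ^ (n + S N) / INR (fact (n + S N))).
  { pose proof (INR_fact_lt_0 (n + S N)).
    apply Rmult_le_pos; [apply pow_le; lra | left; apply Rinv_0_lt_compat; lra]. }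
  unfold exp_rem.
  replace (exp (- x) - Rpoly n x)
    with ((Rpoly (n + S N) x - Rpoly n x) - (Rpoly (n + S N) x - exp (- x))) by ring.
  eapply Rle_trans; [apply Rabs_triang|]; rewrite Rabs_Ropp; lra.
Qed.

Lemma pow_minus_one_cases n : (-1) ^ n = 1 \/ (-1) ^ n = -1.
Proof.
  induction n as [|n [IH|IH]]; simpl; [left|right|left]; rewrite ?IH; ring.
Qed.

Lemma INR_fact_S n : INR (fact (S n)) = (INR n + 1) * INR (fact n).
Proof. rewrite fact_simpl, mult_INR, S_INR; reflexivity. Qed.

Lemma pow_opp x k : (- x) ^ k = (-1) ^ k * x ^ k.
Proof. replace (- x) with (-1 * x) by ring; apply Rpow_mult_distr. Qed.

Definition E_rest (n : nat) : R :=
  exp (-1) * (exp_rem n 1 + exp_rem (n - 1) 1)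
  - exp_rem n 1 * exp_rem (n - 1) 1 - exp_rem (n + 2) 2.

Lemma E_decomposition n : (1 <= n)%nat ->
  E n = 2 ^ (n + 1) * INR n / ((INR n + 1) * (INR n + 2))
        + (-1) ^ n * INR (fact n) * E_rest n.
Proof.
  intros Hn; unfold E, E_rest.
  rewrite !(Rpoly_exp_rem _ 2), !(Rpoly_exp_rem _ 1).
  (* [- (2)] is [Ropp 2], whereas [-1] and [-2] are literals. *)
  replace (exp (- (2))) with (exp (-1) * exp (-1)) by (rewrite <- exp_plus; f_equal; lra).
  replace (exp (- (1))) with (exp (-1)) by (f_equal; lra).
  rewrite exp_rem_S, (exp_rem_S (S n)), !pow_opp, !INR_fact_S, S_INR.
  replace (n + 2)%nat with (S (S n)) by lia; rewrite Nat.add_1_r; simpl pow.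
  pose proof (INR_fact_lt_0 n); pose proof (pos_INR n).
  destruct (pow_minus_one_cases n) as [-> | ->]; field; lra.
Qed.

Lemma Rabs_le_bounds a b : Rabs a <= b -> - b <= a <= b.
Proof.
  intros H; pose proof (Rle_abs a); pose proof (Rle_abs (- a)); rewrite Rabs_Ropp in *; lra.
Qed.

Lemma fact_mul_E_rest_le n : (1 <= n)%nat ->
  INR (fact n) * Rabs (E_rest n) <= 5 + 2 ^ (n + 4) / INR n ^ 3.
Proof.
  intros Hn.
  set (f := INR (fact n)); set (e := exp (-1)).
  set (A := exp_rem n 1); set (B := exp_rem (n - 1) 1); set (T := exp_rem (n + 2) 2).
  assert (Hf : 1 <= f) by (apply (le_INR 1), lt_O_fact).
  assert (Hnr : 1 <= INR n) by (apply (le_INR 1); lia).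
  assert (He : 0 <= e <= 1).
  { unfold e; split; [left; apply exp_pos|]; rewrite <- exp_0; left; apply exp_increasing; lra. }
  assert (HA : f * Rabs A <= 1).
  { assert (H := exp_rem_bound 1 n ltac:(lra) ltac:(rewrite plus_INR; simpl; lra)).
    rewrite pow1, Nat.add_1_r, INR_fact_S in H; fold f A in H.
    apply Rle_trans with (f * (2 * (1 / ((INR n + 1) * f)))); [apply Rmult_le_compat_l; lra|].
    apply Rle_trans with (2 / (INR n + 1)); [right; field; lra|].
    apply Rmult_le_reg_r with (INR n + 1); [lra|]; unfold Rdiv; rewrite Rmult_assoc, Rinv_l; lra. }
  assert (HB : f * Rabs B <= 2).
  { assert (H := exp_rem_bound 1 (n - 1) ltac:(lra) ltac:(rewrite plus_INR, minus_INR by lia; simpl; lra)).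
    rewrite pow1, Nat.sub_add in H by lia; fold f B in H.
    apply Rle_trans with (f * (2 * (1 / f))); [apply Rmult_le_compat_l; lra|]; right; field; lra. }
  assert (HT : f * Rabs T <= 2 ^ (n + 4) / INR n ^ 3).
  { assert (H := exp_rem_bound 2 (n + 2) ltac:(lra) ltac:(rewrite !plus_INR; simpl; lra)).
    replace (n + 2 + 1)%nat with (S (S (S n))) in H by lia.
    rewrite !INR_fact_S, !S_INR in H; fold f T in H.
    replace (2 ^ S (S (S n))) with (2 ^ (n + 4) / 2) in H by (rewrite pow_add; simpl; field).
    assert (0 < 2 ^ (n + 4)) by (apply pow_lt; lra).
    apply Rle_trans with (2 ^ (n + 4) / ((INR n + 3) * (INR n + 2) * (INR n + 1))).
    - eapply Rle_trans; [apply Rmult_le_compat_l; [lra | exact H]|].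
      right; field; lra.
    - unfold Rdiv; apply Rmult_le_compat_l; [lra|]; apply Rinv_le_contravar; nra. }
  assert (Hrest : f * E_rest n = e * (f * A) + e * (f * B) - A * (f * B) - f * T)
    by (unfold E_rest; fold e A B T; ring).
  rewrite <- (Rabs_pos_eq f), <- Rabs_mult, Hrest by lra.
  rewrite <- (Rabs_pos_eq f), <- Rabs_mult in HA, HB, HT by lra.
  assert (Rabs A <= 1) by (rewrite Rabs_mult, (Rabs_pos_eq f) in HA by lra; nra).
  apply Rabs_le_bounds in HA, HB, HT. apply Rabs_le_bounds in H.
  apply Rabs_le; split; nra.
Qed.

Lemma cube_le_pow2 n : (8 <= n)%nat -> INR n ^ 3 <= 2 ^ (n + 1).
Proof.
  intros Hn; replace 2 with (INR 2) by reflexivity; rewrite <- !pow_INR; apply le_INR.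
  induction Hn as [|n Hn IH]; [simpl; lia|].
  rewrite Nat.add_succ_l, (Nat.pow_succ_r' 2).
  assert (S n ^ 3 <= 2 * n ^ 3)%nat.
  { assert (8 * n <= n * n)%nat by nia; assert (8 * (n * n) <= n * (n * n))%nat by nia.
    cbn [Nat.pow]; rewrite !Nat.mul_1_r; nia. }
  lia.
Qed.

Lemma expansion_error_le x : 1 <= x ->
  Rabs (x / ((x + 1) * (x + 2)) - (1 / x - 3 / x ^ 2)) <= 7 / x ^ 3.
Proof.
  intros Hx.
  replace (x / ((x + 1) * (x + 2)) - (1 / x - 3 / x ^ 2))
    with ((7 * x + 6) / (x ^ 2 * (x + 1) * (x + 2))) by (field; lra).
  assert (0 < x ^ 2 * (x + 1) * (x + 2)) by (simpl; nra).
  assert (0 < x ^ 3) by (simpl; nra).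
  rewrite Rabs_pos_eq by (apply Rmult_le_pos; [lra | left; apply Rinv_0_lt_compat; lra]).
  apply Rmult_le_reg_r with (x ^ 2 * (x + 1) * (x + 2) * x ^ 3); [nra|].
  replace ((7 * x + 6) / (x ^ 2 * (x + 1) * (x + 2)) * (x ^ 2 * (x + 1) * (x + 2) * x ^ 3))
    with ((7 * x + 6) * x ^ 3) by (field; lra).
  replace (7 / x ^ 3 * (x ^ 2 * (x + 1) * (x + 2) * x ^ 3))
    with (7 * (x ^ 2 * (x + 1) * (x + 2))) by (field; lra).
  simpl; nra.
Qed.

Lemma scaled_E_rest_le n : (8 <= n)%nat ->
  Rabs ((-1) ^ n * (INR (fact n) * E_rest n) / 2 ^ (n + 1)) <= 13 / INR n ^ 3.
Proof.
  intros Hn.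
  assert (Hx : 8 <= INR n) by (replace 8 with (INR 8) by (simpl; lra); apply le_INR; lia).
  assert (Hcube := cube_le_pow2 n Hn).
  assert (Hrest := fact_mul_E_rest_le n ltac:(lia)).
  set (p := 2 ^ (n + 1)) in *.
  replace (2 ^ (n + 4)) with (8 * p) in Hrest by (unfold p; rewrite !pow_add; simpl; ring).
  assert (0 < INR n ^ 3) by (simpl; nra).
  assert (0 < p) by lra.
  unfold Rdiv; rewrite !Rabs_mult, pow_1_abs, Rabs_inv, (Rabs_pos_eq p),
    (Rabs_pos_eq (INR (fact n)) (Rlt_le _ _ (INR_fact_lt_0 n))), Rmult_1_l by lra.
  apply Rle_trans with ((5 + 8 * p / INR n ^ 3) * / p).
  { apply Rmult_le_compat_r; [left; apply Rinv_0_lt_compat|]; lra. }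
  replace ((5 + 8 * p / INR n ^ 3) * / p) with (5 / p + 8 / INR n ^ 3) by (field; lra).
  assert (5 / p <= 5 / INR n ^ 3).
  { unfold Rdiv; apply Rmult_le_compat_l; [lra|]; apply Rinv_le_contravar; lra. }
  replace (13 / INR n ^ 3) with (5 / INR n ^ 3 + 8 / INR n ^ 3) by (field; lra).
  lra.
Qed.

Theorem corollary1 :
  exists (C : R) (N : nat), (1 <= N)%nat /\
    forall n : nat, (N <= n)%nat ->
      Rabs (E n / 2 ^ (n + 1) - (1 / INR n - 3 / INR n ^ 2)) <= C / INR n ^ 3.
Proof.
  exists 20, 8%nat; split; [lia|]; intros n Hn.
  assert (Hx : 8 <= INR n) by (replace 8 with (INR 8) by (simpl; lra); apply le_INR; lia).
  assert (Hp : 0 < 2 ^ (n + 1)) by (apply pow_lt; lra).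
  rewrite E_decomposition by lia.
  replace ((2 ^ (n + 1) * INR n / ((INR n + 1) * (INR n + 2))
            + (-1) ^ n * INR (fact n) * E_rest n) / 2 ^ (n + 1)
           - (1 / INR n - 3 / INR n ^ 2))
    with ((INR n / ((INR n + 1) * (INR n + 2)) - (1 / INR n - 3 / INR n ^ 2))
          + (-1) ^ n * (INR (fact n) * E_rest n) / 2 ^ (n + 1)) by (field; lra).
  eapply Rle_trans; [apply Rabs_triang|].
  assert (Hmain := expansion_error_le (INR n) ltac:(lra)).
  assert (Hrest := scaled_E_rest_le n Hn).
  assert (0 < INR n ^ 3) by (simpl; nra).
  replace (20 / INR n ^ 3) with (7 / INR n ^ 3 + 13 / INR n ^ 3) by (field; lra).
  lra.
Qed.
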